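(* For $n\ge3$ and $1\le k_1<k_2\le n-1$, $$\begin{aligned}E\Big[E[1_{k_2}^{(n)}\mid\mathcal{Y}_n]\,E[1_{k_1}^{(n)}\mid\mathcal{Y}_n]\Big]={}&\frac{4(n+1)^2}{(n-1)^2(k_1+1)(k_1+2)(k_2+1)(k_2+2)}\\&-\frac{8(n+1)\,(3n-(k_2-2))\,(n-(k_2+1))}{n(n-1)^2(k_1+1)(k_1+2)(k_2+1)(k_2+2)(k_2+3)(k_2+4)}.\end{aligned}$$
   Context: Fix $n\ge 3$. A Yule tree with speciation rate 1 on $n$ tips: start with a single lineage; each lineage independently splits into two at rate 1; the process is stopped just before the $n$-th speciation event, so the tree has $n$ tips and $n-1$ speciation (internal) nodes, numbered $1,\dots,n-1$ chronologically from the root; at each speciation the splitting lineage is uniformly chosen among current lineages. $\mathcal{Y}_n$ is the σ-field generated by the tree (topology and branch lengths). For $1\le k\le n-1$, $1_k^{(n)}$ is the indicator that an unordered pair of distinct tips, chosen uniformly at random (independently of everything else given the tree), has its most recent common ancestor at the $k$-th speciation event; thus $E[1_k^{(n)}\mid\mathcal{Y}_n]$ is the fraction of the $\binom n2$ pairs of tips that coalesce at the $k$-th speciation event. *)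

From HB Require Import structures.
From mathcomp Require Import all_boot all_order all_algebra.
Set Implicit Arguments. Unset Strict Implicit. Unset Printing Implicit Defensive.
Import Order.TTheory GRing.Theory Num.Theory.
Local Open Scope ring_scope.

(* A realisation of the sequence of splitting choices of a Yule tree on n tips:
   at the k-th speciation event (k = 1..n-1) there are k lineages, labelled
   0..k-1, and the splitting one is x (k-1) : 'I_k.  After the split, the two
   daughter lineages get labels (old label) and k.  Under the Yule process the
   choices are independent and uniform, i.e. x is uniform on this finite type. *)
Definition YuleChoice (n : nat) := {dffun forall k : 'I_n.-1, 'I_k.+1}.

Definition chc (n : nat) (x : YuleChoice n) (k : nat) : nat :=
  match @insub nat (fun i => i < n.-1)%N _ k.-1 with
  | Some o => nat_of_ord (x o)
  | None => 0%N
  end.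

(* number of tips descending from lineage i at stage j (after j events),
   with m = number of remaining speciation events *)
Fixpoint descF (c : nat -> nat) (m j i : nat) : nat :=
  match m with
  | 0 => 1%N
  | m'.+1 =>
      if i == c j.+1 then (descF c m' j.+1 i + descF c m' j.+1 j.+1)%N
      else descF c m' j.+1 i
  end.

Definition desc n (x : YuleChoice n) (j i : nat) : nat :=
  descF (chc x) (n.-1 - j) j i.

(* number of unordered pairs of tips whose MRCA is the k-th speciation event *)
Definition pairs_at n (x : YuleChoice n) (k : nat) : nat :=
  (desc x k (chc x k) * desc x k k)%N.

(* E[1_k^{(n)} | Y_n] : fraction of the binom(n,2) pairs coalescing at event k *)
Definition condE1 n (x : YuleChoice n) (k : nat) : rat :=
  (pairs_at x k)%:R / ('C(n, 2))%:R.

Definition yuleE n (F : YuleChoice n -> rat) : rat :=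
  (\sum_(x : YuleChoice n) F x) / (#|{: YuleChoice n}|)%:R.

From mathcomp Require Import all_boot all_order all_algebra.
From mathcomp Require Import zify ring lra.
From Stdlib Require Import FunctionalExtensionality.
Import GRing.Theory Num.Theory.
Local Open Scope ring_scope.

(* The k-th speciation event splits some lineage a, and E[1_k | Y_n] is the
   product of the final numbers of tips descending from a and from its new
   sibling k, divided by C(n, 2).  Each later event splits a uniformly chosen
   lineage, so the descendant counts of the j + 1 lineages alive after event j
   evolve as a Polya urn with j + 1 colours, whose mixed moments are ratios of
   rising factorials.  For k1 < k2 the expected product is computed backwards:
   after event k2 - 1 by averaging over the lineage split at k2 (four distinct
   lineages, or one of them repeated), and from there down to event k1 every
   step multiplies the joint moment of two fixed lineages by (j + 3)/(j + 1),
   which telescopes. *)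

Lemma chc_ord {n} (x : YuleChoice n) (k : 'I_n.-1) : chc x k.+1 = x k.
Proof.
rewrite /chc /=; case: insubP => [u _ uE|]; last by rewrite ltn_ord.
by have -> : u = k by apply: val_inj.
Qed.

Lemma chc0 {n} (x : YuleChoice n) : chc x 0 = 0%N.
Proof.
rewrite /chc /=; case: insubP => [u _ uE|//].
have := ltn_ord (x u); set v := nat_of_ord (x u); clearbody v; rewrite uE /=; lia.
Qed.

Lemma chc_ge {n} (x : YuleChoice n) t : (n <= t)%N -> chc x t = 0%N.
Proof.
move=> nt; rewrite /chc; case: insubP => [u ut _|//].
by exfalso; move: ut nt; case: n {x u} => [|n] /=; case: t => //= t; lia.
Qed.

Definition set_choice (c : nat -> nat) (k a : nat) : nat -> nat :=
  fun t => if t == k then a else c t.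

Fixpoint ext_count j m : nat :=
  if m is m'.+1 then (j.+1 * ext_count j.+1 m')%N else 1%N.

Section ExtensionSum.
Variable R : nmodType.
Implicit Types (F G : (nat -> nat) -> R) (c : nat -> nat).

Fixpoint ext_sum j m c F : R :=
  match m with
  | 0 => F c
  | m'.+1 => \sum_(a < j.+1) ext_sum j.+1 m' (set_choice c j.+1 a) F
  end.

Lemma eq_ext_sum_prefix j m c F G :
  (forall c', (forall t, (t <= j)%N -> c' t = c t) -> F c' = G c') ->
  ext_sum j m c F = ext_sum j m c G.
Proof.
elim: m j c => [|m IH] j c FG /=; first exact: FG.
apply: eq_bigr => a _; apply: IH => c' c'E; apply: FG => t tj.
by rewrite c'E /set_choice ?ifN //; [apply/eqP; lia | lia].
Qed.

Lemma eq_ext_sum j m c F G : F =1 G -> ext_sum j m c F = ext_sum j m c G.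
Proof. by move=> FG; apply: eq_ext_sum_prefix => c' _. Qed.

Lemma ext_sumD j m c F G :
  ext_sum j m c (fun c' => F c' + G c') = ext_sum j m c F + ext_sum j m c G.
Proof.
by elim: m j c => [|m IH] j c //=; rewrite -big_split; apply: eq_bigr => a _.
Qed.

Lemma ext_sum_cat j m1 m2 c F :
  ext_sum j (m1 + m2) c F = ext_sum j m1 c (fun c' => ext_sum (j + m1) m2 c' F).
Proof.
elim: m1 j c => [|m1 IH] j c /=; first by rewrite addn0.
by apply: eq_bigr => a _; rewrite IH addSnnS.
Qed.

Lemma ext_sum_const j m c r : ext_sum j m c (fun _ => r) = r *+ ext_count j m.
Proof.
elim: m j c => [|m IH] j c //=.
by under eq_bigr do rewrite IH; rewrite sumr_const card_ord -mulrnA mulnC.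
Qed.

End ExtensionSum.
Arguments ext_sum {R}.

Lemma ext_sumZ (R : pzSemiRingType) j m c r (F : (nat -> nat) -> R) :
  ext_sum j m c (fun c' => r * F c') = r * ext_sum j m c F.
Proof.
by elim: m j c => [|m IH] j c //=; rewrite mulr_sumr; apply: eq_bigr => a _.
Qed.

Lemma ext_count_gt0 j m : (0 < ext_count j m)%N.
Proof. by elim: m j => [|m IH] j //=; rewrite muln_gt0 IH. Qed.

Lemma ext_count_cat j m1 m2 :
  ext_count j (m1 + m2) = (ext_count j m1 * ext_count (j + m1) m2)%N.
Proof.
elim: m1 j => [|m1 IH] j /=; first by rewrite mul1n addn0.
by rewrite IH addSnnS mulnA.
Qed.

Definition agrees_upto {n} (x : YuleChoice n) j (c : nat -> nat) :=
  all (fun t => chc x t == c t) (iota 1 j).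

Lemma sum_agrees_all (R : nmodType) n c (F : (nat -> nat) -> R) :
  (forall t, (t == 0%N) || (n.-1 < t)%N -> c t = 0%N) ->
  (forall t, (0 < t <= n.-1)%N -> (c t < t)%N) ->
  \sum_(x : YuleChoice n | agrees_upto x n.-1 c) F (chc x) = F c.
Proof.
move=> c0 c_lt.
pose xc : YuleChoice n := finfun (fun k : 'I_n.-1 => inord (c k.+1) : 'I_k.+1).
have xcE (k : 'I_n.-1) : nat_of_ord (xc k) = c k.+1.
  by rewrite ffunE inordK // c_lt //; have := ltn_ord k; lia.
have chc_xc : chc xc = c.
  apply: functional_extensionality => -[|t]; first by rewrite chc0 c0.
  case: (ltnP t n.-1) => tn; first by rewrite (chc_ord xc (Ordinal tn)) xcE.
  by rewrite chc_ge ?c0 //; lia.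
rewrite (big_pred1 xc) ?chc_xc // => x /=.
apply/idP/eqP => [/allP agree_x|->]; last first.
  apply/allP => -[|t]; rewrite mem_iota // => /andP[_ tj].
  have tn : (t < n.-1)%N by lia.
  by rewrite (chc_ord xc (Ordinal tn)) xcE.
apply/ffunP => k; apply: val_inj => /=.
rewrite xcE -(chc_ord x k); apply/eqP/agree_x.
by rewrite mem_iota; have := ltn_ord k; lia.
Qed.

Lemma sum_agrees_ext_sum (R : nmodType) n m j c (F : (nat -> nat) -> R) :
  (j + m = n.-1)%N ->
  (forall t, (t == 0%N) || (j < t)%N -> c t = 0%N) ->
  (forall t, (0 < t <= j)%N -> (c t < t)%N) ->
  \sum_(x : YuleChoice n | agrees_upto x j c) F (chc x) = ext_sum j m c F.
Proof.
elim: m j c => [|m IH] j c /= jmn c0 c_lt.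
  by rewrite addn0 in jmn; subst j; apply: sum_agrees_all.
have jn : (j < n.-1)%N by lia.
rewrite (partition_big (fun x => inord (chc x j.+1) : 'I_j.+1) predT) //=.
apply: eq_bigr => a _.
rewrite -(IH j.+1); first last.
- move=> t /andP[t0 tj]; rewrite /set_choice; case: eqP => [->//|tj'].
  by apply: c_lt; lia.
- move=> t t_out; rewrite /set_choice ifN; last by apply/eqP; move: t_out; lia.
  by apply: c0; move: t_out; lia.
- lia.
apply: eq_bigl => x; rewrite /agrees_upto.
have -> : iota 1 j.+1 = iota 1 j ++ [:: j.+1] by rewrite -[in LHS](addn1 j) iotaD.
rewrite all_cat /= andbT.
rewrite -(inj_eq val_inj) /= inordK ?(chc_ord x (Ordinal jn)) // {2}/set_choice eqxx.
congr andb; apply: eq_in_all => t; rewrite mem_iota => /andP[_ tj].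
by rewrite /set_choice ifN //; apply/eqP; lia.
Qed.

Lemma sum_chc_ext_sum (R : nmodType) n (F : (nat -> nat) -> R) :
  \sum_(x : YuleChoice n) F (chc x) = ext_sum 0 n.-1 (fun _ => 0%N) F.
Proof.
by rewrite -(@sum_agrees_ext_sum _ n n.-1 0) // => t; lia.
Qed.

Lemma card_YuleChoice n : #|{: YuleChoice n}| = ext_count 0 n.-1.
Proof.
by rewrite -sum1_card (@sum_chc_ext_sum nat _ (fun _ => 1%N)) ext_sum_const natn.
Qed.

Local Notation tips c m j i := ((descF c m j i)%:R : rat).

(* Event j + 1 splits lineage a, whose descendants then also include those of
   the new lineage j + 1. *)
Lemma ext_sum_descF_step j m c (F : (nat -> nat) -> rat)
    (Phi : (nat -> rat) -> nat -> (nat -> nat) -> rat) :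
  (forall c', F c' = Phi (fun i => tips c' m.+1 j i) (c' j.+1) c') ->
  ext_sum j m.+1 c F = \sum_(a < j.+1) ext_sum j.+1 m (set_choice c j.+1 a)
     (fun c' => Phi (fun i => tips c' m j.+1 i + (i == a)%:R * tips c' m j.+1 j.+1) a c').
Proof.
move=> FE /=; apply: eq_bigr => a _; apply: eq_ext_sum_prefix => c' c'E; rewrite FE.
have c'a : c' j.+1 = a by rewrite c'E // /set_choice eqxx.
rewrite c'a; congr Phi; apply: functional_extensionality => i /=.
by rewrite c'a; case: (i == a); rewrite ?natrD ?mul1r ?mul0r ?addr0.
Qed.

Lemma sum_ord_indicator (R : pzSemiRingType) k a :
  (a < k)%N -> \sum_(i < k) (((a == i :> nat) : nat)%:R : R) = 1.
Proof.
move=> ak; rewrite (bigD1 (Ordinal ak)) //= eqxx big1 ?addr0 // => i ne.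
suff /negbTE-> : a != i by [].
by apply: contra ne => /eqP ai; apply/eqP/val_inj.
Qed.

Lemma neq_eq_excl (a b x : nat) : a != b -> ~~ ((a == x) && (b == x)).
Proof. by apply: contra => /andP[/eqP-> /eqP->]. Qed.

Lemma expand_mul4_incr (da db dd de : bool) (R : comPzRingType) (xa xb xd xe y : R) :
  ~~ (da && db) -> ~~ (da && dd) -> ~~ (da && de) -> ~~ (db && dd) ->
  ~~ (db && de) -> ~~ (dd && de) ->
  (xa + da%:R * y) * (xb + db%:R * y) * (xd + dd%:R * y) * (xe + de%:R * y)
  = xa * xb * xd * xe + da%:R * (y * xb * xd * xe) + db%:R * (xa * y * xd * xe)
    + dd%:R * (xa * xb * y * xe) + de%:R * (xa * xb * xd * y).
Proof. by case: da; case: db; case: dd; case: de => //= *; ring. Qed.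

Lemma expand_mul211_incr (dx dy dz : bool) (R : comPzRingType) (xx xy xz w : R) :
  ~~ (dx && dy) -> ~~ (dx && dz) -> ~~ (dy && dz) ->
  (xx + dx%:R * w) * (xx + dx%:R * w) * (xy + dy%:R * w) * (xz + dz%:R * w)
  = xx * xx * xy * xz + dx%:R * (w * w * xy * xz) + dx%:R * (2 * (xx * w * xy * xz))
    + dy%:R * (xx * xx * w * xz) + dz%:R * (xx * xx * xy * w).
Proof. by case: dx; case: dy; case: dz => //= *; ring. Qed.

Lemma expand_mul2_incr (da db : bool) (R : comPzRingType) (xa xb y p : R) :
  ~~ (da && db) ->
  (xa + da%:R * y) * (xb + db%:R * y) * p
  = xa * xb * p + da%:R * (y * xb * p) + db%:R * (xa * y * p).
Proof. by case: da; case: db => //= *; ring. Qed.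

Ltac pos_neq0 := repeat (apply/andP; split); apply: lt0r_neq0; lra.

(* The mixed moments of a Polya urn with j+1 colours after m draws: four
   distinct colours give the ratio of rising factorials of length 4, and
   [X^2 = X (X + 1) - X] reduces a squared colour to moments of order 4 and 3. *)
Definition moment4 (j m : nat) : rat := let J := j%:R in let M := m%:R in
  (J+M+1) * (J+M+2) * (J+M+3) * (J+M+4) / ((J+1) * (J+2) * (J+3) * (J+4)).

Definition moment211 (j m : nat) : rat := let J := j%:R in let M := m%:R in
  2 * moment4 j m - (J+M+1) * (J+M+2) * (J+M+3) / ((J+1) * (J+2) * (J+3)).

Lemma ext_sum_prod4 m j c a b d e :
  a != b -> a != d -> a != e -> b != d -> b != e -> d != e ->
  (a <= j)%N -> (b <= j)%N -> (d <= j)%N -> (e <= j)%N ->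
  ext_sum j m c (fun c' => tips c' m j a * tips c' m j b * tips c' m j d * tips c' m j e)
  = (ext_count j m)%:R * moment4 j m.
Proof.
elim: m j c a b d e => [|m IH] j c a b d e ab ad ae bd be de aj bj dj ej.
  by have J0 := ler0n rat j; rewrite /= /moment4 addr0; field; pos_neq0.
rewrite (ext_sum_descF_step _ _ _ _ (fun v _ _ => v a * v b * v d * v e)) //.
transitivity (\sum_(a' < j.+1) (ext_count j.+1 m)%:R * moment4 j.+1 m *
  (1 + (a == a')%:R + (b == a')%:R + (d == a')%:R + (e == a')%:R)).
  apply: eq_bigr => a' _.
  under eq_ext_sum => c' do rewrite expand_mul4_incr ?neq_eq_excl //.
  by rewrite !ext_sumD !ext_sumZ !IH; try lia; ring.
rewrite -mulr_sumr !big_split /= sumr_const card_ord !sum_ord_indicator //; try lia.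
have J0 := ler0n rat j.
by rewrite /= natrM /moment4 -!natr1; field; pos_neq0.
Qed.

Lemma ext_sum_prod211 m j c x y z :
  x != y -> x != z -> y != z -> (x <= j)%N -> (y <= j)%N -> (z <= j)%N ->
  ext_sum j m c (fun c' => tips c' m j x * tips c' m j x * tips c' m j y * tips c' m j z)
  = (ext_count j m)%:R * moment211 j m.
Proof.
elim: m j c x y z => [|m IH] j c x y z xy xz yz xj yj zj.
  by have J0 := ler0n rat j; rewrite /= /moment211 /moment4 addr0; field; pos_neq0.
rewrite (ext_sum_descF_step _ _ _ _ (fun v _ _ => v x * v x * v y * v z)) //.
transitivity (\sum_(a' < j.+1) ((ext_count j.+1 m)%:R * moment211 j.+1 m *
  (1 + (x == a')%:R + (y == a')%:R + (z == a')%:R) +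
  (ext_count j.+1 m)%:R * moment4 j.+1 m * (2 * (x == a')%:R))).
  apply: eq_bigr => a' _.
  under eq_ext_sum => c' do rewrite expand_mul211_incr ?neq_eq_excl //.
  by rewrite !ext_sumD !ext_sumZ !IH ?ext_sum_prod4; try lia; ring.
rewrite big_split /= -!mulr_sumr !big_split /= sumr_const card_ord.
rewrite !sum_ord_indicator //; try lia.
have J0 := ler0n rat j.
by rewrite /= natrM /moment211 /moment4 -!natr1; field; pos_neq0.
Qed.

Definition pairs_chc N k (c : nat -> nat) : rat :=
  tips c (N - k) k (c k) * tips c (N - k) k k.

Definition pair_moment N k j : rat := let K := k%:R in let J := j%:R in
  (K + 1) / ((J + 1) * (J + 2))
  * ((K - 2) * moment4 k (N - k) + 4 * moment211 k (N - k)).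

(* Event j + 1 splits some lineage a'; the j - 1 choices of a' other than a, b
   give a moment of four distinct lineages, while a' = a or a' = b squares one
   of the factors. *)
Lemma ext_sum_prod2_pairs_next N j c a b :
  (j < N)%N -> a != b -> (a <= j)%N -> (b <= j)%N ->
  ext_sum j (N - j) c
    (fun c' => tips c' (N - j) j a * tips c' (N - j) j b * pairs_chc N j.+1 c')
  = (ext_count j (N - j))%:R * pair_moment N j.+1 j.
Proof.
move=> jN ab aj bj.
have ba : (b == a) = false by rewrite eq_sym (negbTE ab).
have -> : (N - j = (N - j.+1).+1)%N by lia.
set M := (N - j.+1)%N.
rewrite (ext_sum_descF_step _ _ _ _
  (fun v a' c' => v a * v b * (tips c' M j.+1 a' * tips c' M j.+1 j.+1))) //.
pose C := (ext_count j.+1 M)%:R : rat.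
transitivity (\sum_(a' < j.+1) (C * moment4 j.+1 M +
    (a == a')%:R * (2 * (C * moment211 j.+1 M) - C * moment4 j.+1 M) +
    (b == a')%:R * (2 * (C * moment211 j.+1 M) - C * moment4 j.+1 M))).
  apply: eq_bigr => a' _; have a'j := ltn_ord a'.
  case: (eqVneq a a') => [<-|a_neq].
    rewrite ba mulr1n mulr0n.
    transitivity (ext_sum j.+1 M (set_choice c j.+1 a) (fun c' =>
      tips c' M j.+1 a * tips c' M j.+1 a * tips c' M j.+1 b * tips c' M j.+1 j.+1 +
      tips c' M j.+1 j.+1 * tips c' M j.+1 j.+1 * tips c' M j.+1 a * tips c' M j.+1 b)).
      by apply: eq_ext_sum => c'; ring.
    by rewrite ext_sumD !ext_sum_prod211 -/C; try lia; ring.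
  case: (eqVneq b a') => [<-|b_neq].
    rewrite mulr1n mulr0n.
    transitivity (ext_sum j.+1 M (set_choice c j.+1 b) (fun c' =>
      tips c' M j.+1 b * tips c' M j.+1 b * tips c' M j.+1 a * tips c' M j.+1 j.+1 +
      tips c' M j.+1 j.+1 * tips c' M j.+1 j.+1 * tips c' M j.+1 a * tips c' M j.+1 b)).
      by apply: eq_ext_sum => c'; ring.
    by rewrite ext_sumD !ext_sum_prod211 -/C; try lia; ring.
  rewrite mulr0n.
  transitivity (ext_sum j.+1 M (set_choice c j.+1 a') (fun c' =>
      tips c' M j.+1 a * tips c' M j.+1 b * tips c' M j.+1 a' * tips c' M j.+1 j.+1)).
    by apply: eq_ext_sum => c'; ring.
  by rewrite ext_sum_prod4 -/C; try lia; ring.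
rewrite !big_split -!mulr_suml sumr_const card_ord !sum_ord_indicator //.
have J0 := ler0n rat j.
by rewrite /= natrM /pair_moment /M -!natr1; field; pos_neq0.
Qed.

Lemma ext_sum_prod2_pairs N k j c a b :
  (j < k <= N)%N -> a != b -> (a <= j)%N -> (b <= j)%N ->
  ext_sum j (N - j) c
    (fun c' => tips c' (N - j) j a * tips c' (N - j) j b * pairs_chc N k c')
  = (ext_count j (N - j))%:R * pair_moment N k j.
Proof.
move=> /andP[jk kN]; have [t jtk] : exists t, (j + t.+1 = k)%N.
  by exists (k - j.+1)%N; lia.
elim: t j c a b jtk {jk} => [|t IH] j c a b jtk ab aj bj.
  by rewrite addn1 in jtk; subst k; apply: ext_sum_prod2_pairs_next.
have -> : (N - j = (N - j.+1).+1)%N by lia.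
set M := (N - j.+1)%N.
rewrite (ext_sum_descF_step _ _ _ _ (fun v _ c' => v a * v b * pairs_chc N k c')) //.
transitivity (\sum_(a' < j.+1) (ext_count j.+1 M)%:R * pair_moment N k j.+1 *
  (1 + (a == a')%:R + (b == a')%:R)).
  apply: eq_bigr => a' _.
  under eq_ext_sum => c' do rewrite expand_mul2_incr ?neq_eq_excl //.
  by rewrite !ext_sumD !ext_sumZ /M !IH; try lia; ring.
rewrite -mulr_sumr !big_split /= sumr_const card_ord !sum_ord_indicator //; try lia.
have J0 := ler0n rat j.
by rewrite /= natrM /pair_moment -!natr1; field; pos_neq0.
Qed.

(* Given the choice a' at event k1, pairs_chc N k1 is the product of the
   descendant counts of the two distinct lineages a' and k1. *)
Lemma ext_sum_pairs_pairs N k1 k2 :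
  (0 < k1 < k2)%N -> (k2 <= N)%N ->
  ext_sum 0 N (fun _ => 0%N) (fun c => pairs_chc N k2 c * pairs_chc N k1 c)
  = (ext_count 0 N)%:R * pair_moment N k2 k1.
Proof.
case: k1 => [//|k] /= kk2 k2N.
have NE : N = (k + (N - k.+1).+1)%N by lia.
rewrite {1}NE ext_sum_cat add0n.
transitivity (ext_sum 0 k (fun _ => 0%N)
   (fun _ => (ext_count k (N - k.+1).+1)%:R * pair_moment N k2 k.+1)).
  apply: eq_ext_sum => c.
  rewrite (ext_sum_descF_step _ _ _ _ (fun v a' c' => pairs_chc N k2 c' *
     (tips c' (N - k.+1) k.+1 a' * tips c' (N - k.+1) k.+1 k.+1))) //.
  rewrite /= natrM -mulrA mulr_natl.
  transitivity (\sum_(a' < k.+1) (ext_count k.+1 (N - k.+1))%:R * pair_moment N k2 k.+1);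
    last by rewrite sumr_const card_ord.
  apply: eq_bigr => a' _; have a'k := ltn_ord a'.
  rewrite -(@ext_sum_prod2_pairs _ _ _ (set_choice c k.+1 a') a' k.+1) ?neq_ltn ?a'k;
    try lia.
  by apply: eq_ext_sum => c'; rewrite mulrC.
by rewrite ext_sum_const -mulrnAl -mulr_natr -natrM mulnC -ext_count_cat -NE.
Qed.

Lemma natr_bin2 (R : numFieldType) n :
  (1 <= n)%N -> ('C(n, 2)%:R : R) = n%:R * (n%:R - 1) / 2.
Proof.
move=> n1; have /(congr1 (fun m => m%:R : R)) : ('C(n, 2) * 2 = n * (n - 1))%N.
  by rewrite (bin_ffact n 2) ffactnS ffactn1 subn1.
by rewrite natrM natrM natrB // => <-; field.
Qed.

Lemma pairs_at_chc n (x : YuleChoice n) k :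
  (pairs_at x k)%:R = pairs_chc n.-1 k (chc x).
Proof. by rewrite /pairs_at /desc natrM. Qed.

Lemma yuleE_condE1_pair n k1 k2 : (0 < k1 < k2)%N -> (k2 <= n.-1)%N ->
  yuleE (fun x : YuleChoice n => condE1 x k2 * condE1 x k1)
  = pair_moment n.-1 k2 k1 / 'C(n, 2)%:R ^+ 2.
Proof.
move=> k12 k2n; rewrite /yuleE card_YuleChoice.
transitivity ((\sum_(x : YuleChoice n) pairs_chc n.-1 k2 (chc x) * pairs_chc n.-1 k1 (chc x))
  / 'C(n, 2)%:R ^+ 2 / (ext_count 0 n.-1)%:R).
  congr (_ * _); rewrite mulr_suml; apply: eq_bigr => x _.
  by rewrite /condE1 !pairs_at_chc expr2 invfM; ring.
rewrite (@sum_chc_ext_sum _ _ (fun c => pairs_chc n.-1 k2 c * pairs_chc n.-1 k1 c)).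
rewrite ext_sum_pairs_pairs //.
rewrite mulrAC [_ * pair_moment _ _ _]mulrC mulfK // pnatr_eq0 -lt0n.
exact: ext_count_gt0.
Qed.

Theorem mainTheorem18 (n k1 k2 : nat) :
  (3 <= n)%N -> (1 <= k1)%N -> (k1 < k2)%N -> (k2 <= n - 1)%N ->
  yuleE (fun x : YuleChoice n => condE1 x k2 * condE1 x k1)
  = 4 * (n%:R + 1) ^+ 2
      / ((n%:R - 1) ^+ 2 * (k1%:R + 1) * (k1%:R + 2) * (k2%:R + 1) * (k2%:R + 2))
    - 8 * (n%:R + 1) * (3 * n%:R - (k2%:R - 2)) * (n%:R - (k2%:R + 1))
      / (n%:R * (n%:R - 1) ^+ 2 * (k1%:R + 1) * (k1%:R + 2) * (k2%:R + 1)
         * (k2%:R + 2) * (k2%:R + 3) * (k2%:R + 4)) :> rat.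
Proof.
move=> n3 k1_gt0 k12 k2n.
rewrite yuleE_condE1_pair ?k1_gt0 //; last by lia.
rewrite natr_bin2 /pair_moment /moment211 /moment4; last by lia.
have -> : ((n.-1 - k2)%:R : rat) = n%:R - 1 - k2%:R.
  by rewrite -subn1 !natrB //; lia.
have n3' : (3%:R <= n%:R :> rat) by rewrite ler_nat.
have k1_ge1 : (1%:R <= k1%:R :> rat) by rewrite ler_nat.
have k2_ge2 : (2%:R <= k2%:R :> rat) by rewrite ler_nat; lia.
by field; pos_neq0.
Qed.
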